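(* Let $H$ be a canonical 2-edge-cover of a graph $G=(V,E)$, let $H_{brg}$ be the set of bridges of $H$, and suppose $|H_{brg}|=b|H|$ and exactly $t|H|$ edges of $H$ belong to 2EC components of $H$ which are triangles. Let $S=H\setminus H_{brg}$ and assign credits to the components of $(V,S)$ (every component of $(V,S)$ is 2EC, an isolated node being regarded as a degenerate 2EC component) as follows: a component is light if it is a triangle 2EC component of $H$ and receives $1/2$ credit; every other component is heavy and receives $2$ credits. Let $cr(S)$ be the total number of credits and $cost(S)=|S|+cr(S)$. Then $cost(S)\le \left(\frac32-\frac13 t+\frac12 b\right)|H|$.
   Context: A 2-edge-cover of $G=(V,E)$ is $H\subseteq E$ with every node incident to at least two edges of $H$. A graph is 2EC if connected and it stays connected after removal of any one edge; 2EC components of $H$ are components of $(V,H)$ that are 2EC. In a non-2EC component $C$ of $H$, a bridge is an edge whose removal disconnects $C$; a block is a maximal 2EC subgraph of $C$ with at least 2 nodes; a leaf block is a block incident to exactly one bridge of $C$, an inner block otherwise. $H$ is canonical if: (i) every 2EC component of $H$ is an $i$-cycle ($3\le i\le6$) or has at least 7 edges; (ii) leaf blocks have at least 6 edges and inner blocks at least 4 edges; (iii) no 2-edge-cover of the same size with fewer connected components can be obtained from $H$ by adding up to 3 edges and removing the same number of edges. *)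

From HB Require Import structures.
From mathcomp Require Import all_boot all_order all_algebra.
Set Implicit Arguments. Unset Strict Implicit. Unset Printing Implicit Defensive.
Import Order.TTheory GRing.Theory Num.Theory.

(* Graphs: a finite simple graph G = (V, E) with V a finType and E a set of
   2-element subsets of V.  Subgraphs / edge sets are {set {set V}}. *)

Section Defs.
Variable V : finType.
Implicit Types (W C : {set V}) (E F H : {set {set V}}).

Definition simple_graph E : Prop := forall e, e \in E -> #|e| = 2.

Definition adjW W F : rel V :=
  fun x y => [&& x \in W, y \in W & [set x; y] \in F].

Definition connectedb W F : bool :=
  [forall x in W, forall y in W, connect (adjW W F) x y].

Definition twoEC W F : bool :=
  connectedb W F && [forall f in F, connectedb W (F :\ f)].

Definition edges_in W F : {set {set V}} := [set e in F | e \subset W].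

Definition comps F : {set {set V}} :=
  [set [set y | connect (adjW setT F) x y] | x : V].

Definition deg F (v : V) : nat := #|[set e in F | v \in e]|.

Definition two_edge_cover H : bool := [forall v, 2 <= deg H v].

Definition twoEC_comp H C : bool := (C \in comps H) && twoEC C (edges_in C H).

Definition is_cycle_comp H C (i : nat) : bool :=
  [&& C \in comps H, #|C| == i, #|edges_in C H| == i &
      [forall v in C, deg (edges_in C H) v == 2]].

Definition bridges H : {set {set V}} :=
  [set e in H | [exists C in comps H,
     [&& ~~ twoEC C (edges_in C H), e \subset C &
         ~~ connectedb C (edges_in C H :\ e)]]].

Definition is_block H C W F : Prop :=
  [/\ C \in comps H, ~~ twoEC C (edges_in C H),
      [&& W \subset C, F \subset edges_in W H, twoEC W F & 2 <= #|W|] &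
      forall W' F', W \subset W' -> F \subset F' -> W' \subset C ->
        F' \subset edges_in W' H -> twoEC W' F' -> 2 <= #|W'| ->
        W' = W /\ F' = F].

Definition nb_incident_bridges H W : nat :=
  #|[set e in bridges H | e :&: W != set0]|.

Definition leaf_block H C W F : Prop :=
  is_block H C W F /\ nb_incident_bridges H W = 1.

Definition inner_block H C W F : Prop :=
  is_block H C W F /\ nb_incident_bridges H W <> 1.

Definition canonical E H : Prop :=
  [/\ H \subset E, two_edge_cover H,
      (* (i) *)
      (forall C, twoEC_comp H C ->
         (exists2 i, 3 <= i <= 6 & is_cycle_comp H C i)
         \/ 7 <= #|edges_in C H|),
      (* (ii) *)
      ((forall C W F, leaf_block H C W F -> 6 <= #|F|) /\
       (forall C W F, inner_block H C W F -> 4 <= #|F|)) &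
      (* (iii) *)
      (forall H', H' \subset E -> two_edge_cover H' -> #|H'| = #|H| ->
         #|H' :\: H| = #|H :\: H'| -> #|H' :\: H| <= 3 ->
         ~ (#|comps H'| < #|comps H|))].

Definition triangle_comp H C : bool := twoEC_comp H C && is_cycle_comp H C 3.

Definition triangle_edges H : {set {set V}} :=
  [set e in H | [exists C in comps H, triangle_comp H C && (e \subset C)]].

Definition S_of H : {set {set V}} := H :\: bridges H.

Definition light_comps H : {set {set V}} :=
  [set K in comps (S_of H) | triangle_comp H K].

Definition heavy_comps H : {set {set V}} :=
  comps (S_of H) :\: light_comps H.

Local Open Scope ring_scope.

Definition credits H : rat :=
  (1 / 2) * #|light_comps H|%:R + 2 * #|heavy_comps H|%:R.

Definition costS H : rat := #|S_of H|%:R + credits H.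

End Defs.

From HB Require Import structures.
From mathcomp Require Import all_boot all_order all_algebra.
From mathcomp Require Import zify ring lra.
Set Implicit Arguments. Unset Strict Implicit. Unset Printing Implicit Defensive.
Import Order.TTheory GRing.Theory Num.Theory.

(* Deleting a single edge creates at most one new
   component, so (V, S) has at most #|comps H| + #|bridges H| components.  Every
   component of H keeps at least four edges in S, or three if it is a triangle:
   a 2EC component has no bridge and, by (i), is a cycle of length at least 3
   or has at least 7 edges; a non-2EC component contains a cycle because H has
   minimum degree 2, hence a block, whose at least 4 edges (by (ii)) are not
   bridges.  Triangle components of H remain light components of (V, S), and
   each has 3 edges.  Together with #|S| = #|H| - #|bridges H| these linear
   inequalities give the bound. *)

Lemma eq_set2 (T : finType) (x y x' y' : T) :
  [set x; y] = [set x'; y'] -> (x = x' \/ x = y') /\ (y = x' \/ y = y').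
Proof. by move=> e; split; apply/set2P; rewrite -e ?set21 ?set22. Qed.

Lemma cards2_set2 (T : finType) (e : {set T}) x :
  #|e| = 2 -> x \in e -> exists2 y, y != x & e = [set x; y].
Proof.
move=> /eqP/cards2P[a [b [ab ->]]] /set2P[]->; first by exists b; rewrite // eq_sym.
by exists a; rewrite // setUC.
Qed.

Lemma leq_card_imset_factor (aT rT rT' : finType) (f : aT -> rT) (g : aT -> rT')
    (A : {pred aT}) :
  {in A &, forall x y, f x = f y -> g x = g y} -> #|g @: A| <= #|f @: A|.
Proof.
move=> fg; pose h y := omap g [pick x in A | f x == y].
rewrite -(card_imset _ Some_inj); apply: leq_trans (leq_imset_card h _).
apply/subset_leq_card/subsetP => _ /imsetP[_ /imsetP[x xA ->] ->].
apply/imsetP; exists (f x); first exact: imset_f.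
rewrite /h; case: pickP => [x' /andP[x'A /eqP fx']|/(_ x)]; last by rewrite xA eqxx.
by rewrite /= (fg x' x).
Qed.

Lemma leq_card_bigcup (I T : finType) (A : {pred I}) (F : I -> {set T}) :
  #|\bigcup_(i in A) F i| <= \sum_(i in A) #|F i|.
Proof.
elim/big_rec2: _ => [|i n U _ le]; first by rewrite cards0.
by apply: leq_trans (leq_card_setU _ _) _; rewrite leq_add2l.
Qed.

Lemma connect_steps (T : finType) (r : rel T) (c : nat -> T) a b :
  a <= b -> (forall m, a <= m < b -> r (c m) (c m.+1)) -> connect r (c a) (c b).
Proof.
elim: b => [|b IH]; first by rewrite leqn0 => /eqP-> _; apply: connect0.
rewrite leq_eqVlt => /orP[/eqP-> _|ab step]; first exact: connect0.
apply: connect_trans (IH ab _) (connect1 (step b _)) => [m /andP[am mb]|].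
  by apply: step; rewrite am ltnW.
by rewrite -ltnS ab ltnSn.
Qed.

Section Connectivity.
Variable V : finType.
Implicit Types (W C : {set V}) (F G H : {set {set V}}).

Lemma adjW_sym W F : symmetric (adjW W F).
Proof. by move=> x y; rewrite /adjW setUC andbCA. Qed.

Lemma connect_adjW_sym W F : connect_sym (adjW W F).
Proof. exact/sym_connect_sym/adjW_sym. Qed.

Lemma connect_adjW_mono W W' F F' x y : W \subset W' -> F \subset F' ->
  connect (adjW W F) x y -> connect (adjW W' F') x y.
Proof.
move=> sW sF; apply: connect_sub => a b /and3P[aW bW ab].
by apply: connect1; rewrite /adjW (subsetP sW _ aW) (subsetP sW _ bW) (subsetP sF _ ab).
Qed.

Lemma connect_adjW_setD1 W F u v x y :
  connect (adjW W (F :\ [set u; v])) u v ->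
  connect (adjW W F) x y -> connect (adjW W (F :\ [set u; v])) x y.
Proof.
move=> cuv; apply: connect_sub => a b /and3P[aW bW ab].
have [euv|neuv] := eqVneq [set a; b] [set u; v]; last first.
  by apply: connect1; rewrite /adjW aW bW !inE neuv.
have [[]-> []->] := eq_set2 euv; rewrite ?connect0 //.
by rewrite connect_adjW_sym.
Qed.

Lemma twoEC_pairs W F : connectedb W F ->
  (forall f, f \in F -> exists u v, f = [set u; v] /\ connect (adjW W (F :\ f)) u v) ->
  twoEC W F.
Proof.
move=> cW hF; rewrite /twoEC cW; apply/forall_inP => f /hF[u [v [-> cuv]]].
apply/forall_inP => x xW; apply/forall_inP => y yW.
exact: connect_adjW_setD1 cuv (forall_inP (forall_inP cW x xW) y yW).
Qed.

Definition comp_of F x := [set y | connect (adjW setT F) x y].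

Lemma comp_of_comps F x : comp_of F x \in comps F.
Proof. exact: imset_f. Qed.

Lemma mem_comp_of F x y : (y \in comp_of F x) = connect (adjW setT F) x y.
Proof. by rewrite inE. Qed.

Lemma comp_of_id F x : x \in comp_of F x.
Proof. by rewrite mem_comp_of connect0. Qed.

Lemma comp_of_eq F x y : connect (adjW setT F) x y -> comp_of F x = comp_of F y.
Proof.
move=> cxy; apply/setP => z; rewrite !mem_comp_of.
by apply/idP/idP; apply: connect_trans; rewrite // connect_adjW_sym.
Qed.

Lemma compsE F C x : C \in comps F -> x \in C -> C = comp_of F x.
Proof. by case/imsetP => r _ -> xC; apply: comp_of_eq; rewrite -mem_comp_of. Qed.

Lemma comps_eq F C C' x : C \in comps F -> C' \in comps F -> x \in C -> x \in C' -> C = C'.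
Proof. by move=> CF C'F xC xC'; rewrite (compsE CF xC) (compsE C'F xC'). Qed.

Lemma comps_adj_closed F C x y : C \in comps F -> x \in C -> [set x; y] \in F -> y \in C.
Proof.
move=> CF xC xyF; rewrite (compsE CF xC) mem_comp_of connect1 //.
by rewrite /adjW !inE xyF.
Qed.

Lemma comps_connected F C : C \in comps F -> connectedb C (edges_in C F).
Proof.
case/imsetP => r _ ->; set D := [set y | _].
have rD y : y \in D -> connect (adjW D (edges_in D F)) r y.
  rewrite mem_comp_of => /connectP[p]; elim/last_ind: p y => [|p z IH] y /=.
    by move=> _ ->; apply: connect0.
  rewrite rcons_path last_rcons => /andP[rp /and3P[_ _ pz]] ->.
  set x := last r p in rp pz *.
  have xD : x \in D by rewrite mem_comp_of; apply/connectP; exists p.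
  have zD : z \in D by apply: comps_adj_closed pz; rewrite ?comp_of_comps.
  apply: connect_trans (IH _ rp erefl) (connect1 _).
  by rewrite /adjW xD zD !inE pz subUset !sub1set xD zD.
apply/forall_inP => x /rD rx; apply/forall_inP => y /rD ry.
by apply: connect_trans ry; rewrite connect_adjW_sym.
Qed.

End Connectivity.

Section ComponentCount.
Variable V : finType.
Implicit Types (C : {set V}) (F G H : {set {set V}}).

Lemma connect_setD1_pair G u v x y (c := connect (adjW setT (G :\ [set u; v]))) :
  connect (adjW setT G) x y -> c x y || (c x u || c x v) && (c y u || c y v).
Proof.
have c_refl w : c w w := connect0 _ w.
have c_trans w1 w2 w3 : c w1 w2 -> c w2 w3 -> c w1 w3 := @connect_trans _ _ w2 w1 w3.
have c_sym w1 w2 : c w1 w2 = c w2 w1 := connect_adjW_sym _ _ w1 w2.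
have reach_trans w w' : c w w' -> c w' u || c w' v -> c w u || c w v.
  by move=> cww' /orP[] cw'; rewrite (c_trans _ _ _ cww' cw') ?orbT.
have reach_uv w : (w == u) || (w == v) -> c w u || c w v.
  by case/orP => /eqP->; rewrite c_refl ?orbT.
move=> /connectP[p xp yE]; elim: p x xp yE => [|z p IH] x /=.
  by move=> _ ->; rewrite c_refl.
case/andP => /and3P[_ _ xzG] zp yE.
have [exz|nexz] := eqVneq [set x; z] [set u; v].
  have [xuv zuv] := eq_set2 exz.
  have rx : c x u || c x v by apply: reach_uv; case: xuv => ->; rewrite eqxx ?orbT.
  have rz : c z u || c z v by apply: reach_uv; case: zuv => ->; rewrite eqxx ?orbT.
  rewrite rx /=; apply/orP; right.
  case/orP: (IH z zp yE) => [czy|/andP[_ //]].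
  by apply: (reach_trans _ z _ rz); rewrite c_sym.
have cxz : c x z by apply: connect1; rewrite /adjW !inE nexz xzG.
case/orP: (IH z zp yE) => [czy|/andP[rz ->]]; first by rewrite (c_trans _ _ _ cxz czy).
by rewrite (reach_trans _ _ cxz rz) orbT.
Qed.

Lemma card_comps_setD1 G u v : #|comps (G :\ [set u; v])| <= #|comps G| + 1.
Proof.
set G' := G :\ [set u; v]; set T := [set x | ~~ connect (adjW setT G') x u].
have sub : comps G' \subset comp_of G' u |: comp_of G' @: T.
  apply/subsetP => _ /imsetP[x _ ->]; rewrite in_setU1 -/(comp_of G' x).
  have [xT|] := boolP (x \in T); first by rewrite imset_f ?orbT.
  by rewrite inE negbK => /comp_of_eq->; rewrite eqxx.
(* Apart from the component of u, the components of G' are determined by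
   the components of G containing them. *)
have factor : {in T &, forall x y, comp_of G x = comp_of G y -> comp_of G' x = comp_of G' y}.
  move=> x y; rewrite !inE => xu yu Gxy.
  have := connect_setD1_pair u v (_ : connect (adjW setT G) x y).
  rewrite -mem_comp_of Gxy comp_of_id => /(_ isT); rewrite (negbTE xu) (negbTE yu) /=.
  case/orP => [|/andP[xv yv]]; first exact: comp_of_eq.
  by apply: comp_of_eq; apply: connect_trans xv _; rewrite connect_adjW_sym.
apply: leq_trans (subset_leq_card sub) _; rewrite cardsU1 addnC leq_add ?leq_b1 //.
apply: leq_trans (leq_card_imset_factor factor) (subset_leq_card _).
by apply/subsetP => _ /imsetP[x _ ->]; apply: comp_of_comps.
Qed.

Lemma card_comps_subset F G : F \subset G -> simple_graph G ->
  #|comps F| <= #|comps G| + #|G :\: F|.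
Proof.
have [n] := ubnP #|G :\: F|; elim: n G => // n IH G ltn sFG simG.
have [GF0|/set0Pn[e /setDP[eG eF]]] := eqVneq (G :\: F) set0.
  have -> : F = G by apply/eqP; rewrite eqEsubset sFG -setD_eq0 GF0 eqxx.
  exact: leq_addr.
have [u [v [_ euv]]] := cards2P _ (introT eqP (simG e eG)).
have cardGe : #|G :\: F| = #|(G :\ e) :\: F|.+1.
  by rewrite (cardsD1 e) !inE eG eF !setDDl setUC.
have sFGe : F \subset G :\ e.
  by apply/subsetP => f fF; rewrite !inE (subsetP sFG f fF) andbT; apply: contraNneq eF => <-.
have simGe : simple_graph (G :\ e) by move=> f /setD1P[_ /simG].
apply: leq_trans (IH (G :\ e) _ sFGe simGe) _; first by rewrite -ltnS -cardGe.
by rewrite cardGe addnS -addn1 addnAC leq_add2r euv card_comps_setD1.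
Qed.

End ComponentCount.

Section Cycles.
Variable V : finType.
Implicit Types (C W : {set V}) (F H : {set {set V}}).

Definition twoEC_subgraph H C W F :=
  [&& W \subset C, F \subset edges_in W H, twoEC W F & 2 <= #|W|].

Variables (c : nat -> V) (k : nat).

Definition cycle_nodes := [set c i | i : 'I_k.+1].

Definition cycle_edges :=
  [set [set c i; c i.+1] | i : 'I_k] :|: [set [set c k; c 0]].

Lemma mem_cycle_nodes i : i <= k -> c i \in cycle_nodes.
Proof. by move=> ik; apply/imsetP; exists (Ordinal (ik : i < k.+1)). Qed.

Lemma cycle_nodesP x : reflect (exists2 i, i <= k & x = c i) (x \in cycle_nodes).
Proof.
apply: (iffP imsetP) => [[i _ ->]|[i ik ->]]; first by exists i; rewrite // -ltnS.
by exists (Ordinal (ik : i < k.+1)).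
Qed.

Lemma cycle_edgesP f :
  reflect ((exists2 i, i < k & f = [set c i; c i.+1]) \/ f = [set c k; c 0])
          (f \in cycle_edges).
Proof.
rewrite inE; apply: (iffP orP) => [[/imsetP[i _ ->]|/set1P->]|[[i ik ->]|->]].
- by left; exists i.
- by right.
- by left; apply/imsetP; exists (Ordinal ik).
- by right; rewrite set11.
Qed.

Hypothesis c_inj : forall i j, c i = c j -> i <= k -> j <= k -> i = j.
Hypothesis k_ge2 : 2 <= k.

Lemma twoEC_cycle : twoEC cycle_nodes cycle_edges.
Proof.
set W := cycle_nodes; set F := cycle_edges.
have segment (G : {set {set V}}) a b : a <= b <= k ->
    (forall m, a <= m < b -> [set c m; c m.+1] \in G) -> connect (adjW W G) (c a) (c b).
  case/andP => ab bk segG; apply: connect_steps ab _ => m /andP[am mb].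
  by rewrite /adjW !mem_cycle_nodes ?segG ?am //; lia.
have seg_in m : m < k -> [set c m; c m.+1] \in F.
  by move=> mk; apply/cycle_edgesP; left; exists m.
have close_in : [set c k; c 0] \in F by apply/cycle_edgesP; right.
have seg_neq m i : m < k -> i < k -> m != i -> [set c m; c m.+1] != [set c i; c i.+1].
  move=> mk ik /eqP mi; apply/eqP => /eq_set2[[]/c_inj h1 []/c_inj h2]; lia.
have close_neq m : m < k -> [set c m; c m.+1] != [set c k; c 0].
  move=> mk; apply/eqP => /eq_set2[[]/c_inj h1 []/c_inj h2]; lia.
apply: twoEC_pairs.
  have from0 i : i <= k -> connect (adjW W F) (c 0) (c i).
    by move=> ik; apply: segment => [|m mi]; [rewrite ik | apply: seg_in; lia].
  apply/forall_inP => _ /cycle_nodesP[i ik ->]; apply/forall_inP => _ /cycle_nodesP[j jk ->].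
  by apply: connect_trans (from0 j jk); rewrite connect_adjW_sym from0.
move=> _ /cycle_edgesP[[i ik ->]|->].
  exists (c i), (c i.+1); split => //; rewrite connect_adjW_sym.
  have avoid m : m < k -> m != i -> [set c m; c m.+1] \in F :\ [set c i; c i.+1].
    by move=> mk mi; rewrite in_setD1 seg_neq ?seg_in.
  apply: connect_trans (_ : connect _ _ (c k)) _.
    by apply: segment => [|m mi]; [lia | apply: avoid; lia].
  apply: connect_trans (_ : connect _ _ (c 0)) _.
    apply: connect1; rewrite /adjW !mem_cycle_nodes // in_setD1 close_in andbT.
    by rewrite eq_sym close_neq.
  by apply: segment => [|m mi]; [lia | apply: avoid; lia].
exists (c k), (c 0); split => //; rewrite connect_adjW_sym.
apply: segment => [|m mi]; first by rewrite leqnn.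
by rewrite in_setD1 close_neq ?seg_in //; lia.
Qed.

Lemma cycle_twoEC_subgraph H C :
  (forall i, i <= k -> c i \in C) ->
  (forall i, i < k -> [set c i; c i.+1] \in H) -> [set c k; c 0] \in H ->
  twoEC_subgraph H C cycle_nodes cycle_edges.
Proof.
move=> cC segH closeH; rewrite /twoEC_subgraph twoEC_cycle /=.
apply/and3P; split.
- by apply/subsetP => _ /cycle_nodesP[i ik ->]; apply: cC.
- apply/subsetP => _ /cycle_edgesP[[i ik ->]|->]; rewrite inE ?segH ?closeH //.
    by rewrite subUset !sub1set !mem_cycle_nodes // ltnW.
  by rewrite subUset !sub1set !mem_cycle_nodes.
- have c01 : c 0 != c 1 by apply/eqP => /c_inj; lia.
  apply: leq_trans (subset_leq_card (_ : [set c 0; c 1] \subset _)).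
    by rewrite cards2 c01.
  by rewrite subUset !sub1set !mem_cycle_nodes //; lia.
Qed.

End Cycles.

Section TwoECSubgraphs.
Variable V : finType.
Implicit Types (C W : {set V}) (F H : {set {set V}}).

Lemma path_adjW_all W F x p : path (adjW W F) x p -> all (mem W) p.
Proof. by elim: p x => //= y p IH x /andP[/and3P[_ -> _] /IH]. Qed.

Lemma exists_other_neighbor H z y : simple_graph H -> 2 <= deg H z ->
  exists w, [/\ [set z; w] \in H, w != z & w != y].
Proof.
move=> simH /card_gt1P[e1 [e2 []]]; rewrite !inE => /andP[e1H ze1] /andP[e2H ze2] e12.
have [w1 w1z e1E] := cards2_set2 (simH _ e1H) ze1.
have [w2 w2z e2E] := cards2_set2 (simH _ e2H) ze2.
have [w1y|w1y] := eqVneq w1 y; last by exists w1; rewrite -e1E.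
exists w2; rewrite -e2E; split => //; apply: contraNneq e12 => w2y.
by rewrite e1E e2E w1y w2y.
Qed.

Lemma extend_path_or_cycle H C z p :
  simple_graph H -> two_edge_cover H -> C \in comps H ->
  z \in C -> uniq (z :: p) -> path (adjW C H) z p ->
  (exists w, uniq (w :: z :: p) && path (adjW C H) w (z :: p)) \/
  exists W F, twoEC_subgraph H C W F.
Proof.
move=> simH cov CH zC uzp zp.
have [w [zwH wz wy]] := exists_other_neighbor (head z p) simH (forallP cov z).
have wC : w \in C := comps_adj_closed CH zC zwH.
have [wzp|wzp] := boolP (w \in z :: p); last first.
  left; exists w; rewrite cons_uniq wzp uzp /= zp andbT.
  by rewrite /adjW wC zC setUC zwH.
right; set j := index w (z :: p).
have jp : j <= size p by rewrite -ltnS index_mem.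
have wE : nth z (z :: p) j = w := nth_index z wzp.
have j0 : j != 0 by apply: contraNneq wz => j0; rewrite -wE j0.
have j1 : j != 1 by apply: contraNneq wy => j1; rewrite -wE j1 /= nth0.
have sC : all (mem C) (z :: p) by rewrite /= zC (path_adjW_all zp).
exists (cycle_nodes (nth z (z :: p)) j), (cycle_edges (nth z (z :: p)) j).
apply: cycle_twoEC_subgraph.
- move=> a b ab aj bj; apply/eqP.
  by rewrite -(nth_uniq z _ _ uzp) ?ab //= ltnS (leq_trans _ jp).
- by rewrite ltn_neqAle eq_sym j1 lt0n j0.
- move=> i ij; apply: (allP sC).
  by rewrite mem_nth //= ltnS (leq_trans ij jp).
- move=> i ij; move/(pathP z)/(_ i (leq_trans ij jp)): zp.
  by case/and3P.
- by rewrite wE /= setUC.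
Qed.

Lemma exists_twoEC_subgraph H C :
  simple_graph H -> two_edge_cover H -> C \in comps H ->
  exists W F, twoEC_subgraph H C W F.
Proof.
move=> simH cov CH; have [x0 x0C] : exists x0, x0 \in C.
  by case/imsetP: CH => r _ ->; exists r; apply: comp_of_id.
suff [[z [p [sp _ uzp _]]]|//] : (exists z p, [/\ size p = #|V|, z \in C,
    uniq (z :: p) & path (adjW C H) z p]) \/ exists W F, twoEC_subgraph H C W F.
  by have := max_card (mem (z :: p)); rewrite (card_uniqP uzp) /= sp ltnn.
elim: #|V| => [|n [[z [p [sp zC uzp zp]]]|]]; last by right.
  by left; exists x0, [::].
have [[w /andP[uw pw]]|] := extend_path_or_cycle simH cov CH zC uzp zp; last by right.
left; exists w, (z :: p); rewrite /= sp; split => //.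
by case/andP: pw => /and3P[].
Qed.

Lemma exists_block H C : C \in comps H -> ~~ twoEC C (edges_in C H) ->
  (exists W F, twoEC_subgraph H C W F) -> exists W F, is_block H C W F.
Proof.
move=> CH nC [W0 [F0 sub0]].
pose P (q : {set V} * {set {set V}}) := twoEC_subgraph H C q.1 q.2.
have [[W F] /= subWF maxWF] := @arg_maxnP _ (W0, F0) P (fun q => #|q.1| + #|q.2|) sub0.
exists W, F; split => // W' F' sWW' sFF' W'C F'H tW' cW'.
have := maxWF (W', F'); rewrite /P /twoEC_subgraph W'C F'H tW' cW' => /(_ isT) /= le.
have leW := subset_leq_card sWW'; have leF := subset_leq_card sFF'.
split; apply/eqP; rewrite eq_sym eqEcard ?sWW' ?sFF' //=.
  by rewrite -(leq_add2r #|F'|) (leq_trans le) ?leq_add2l.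
by rewrite -(leq_add2l #|W'|) (leq_trans le) ?leq_add2r.
Qed.

End TwoECSubgraphs.

Section Bridges.
Variable V : finType.
Implicit Types (C W : {set V}) (F H : {set {set V}}).

Lemma bridges_subset H : bridges H \subset H.
Proof. by apply/subsetP => e /setIdP[]. Qed.

Lemma twoEC_edges_notin_bridges H C W F f :
  simple_graph H -> C \in comps H -> W \subset C -> F \subset edges_in W H ->
  twoEC W F -> f \in F -> f \notin bridges H.
Proof.
move=> simH CH WC FWH /andP[_ /forall_inP tWF] fF.
have /setIdP[fH fW] := subsetP FWH f fF.
have [u [v [_ fE]]] := cards2P _ (introT eqP (simH f fH)).
have uW : u \in W by rewrite (subsetP fW) // fE set21.
have vW : v \in W by rewrite (subsetP fW) // fE set22.
apply/negP; rewrite inE fH => /exists_inP[C' C'H /and3P[_ fC' /negP]]; apply.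
have -> : C' = C.
  by apply: (comps_eq C'H CH (subsetP fC' u _) (subsetP WC u uW)); rewrite fE set21.
apply/forall_inP => x xC; apply/forall_inP => y yC; rewrite fE.
apply: connect_adjW_setD1; last exact: forall_inP (forall_inP (comps_connected CH) x xC) y yC.
have := forall_inP (forall_inP (tWF f fF) u uW) v vW; rewrite fE.
apply: connect_adjW_mono => //; apply/subsetP => g; rewrite !inE => /andP[-> gF].
by have /setIdP[-> gW] := subsetP FWH g gF; rewrite (subset_trans gW WC).
Qed.

Lemma twoEC_edges_in_S_of H C W F :
  simple_graph H -> C \in comps H -> W \subset C -> F \subset edges_in W H ->
  twoEC W F -> F \subset edges_in C (S_of H).
Proof.
move=> simH CH WC FWH tWF; apply/subsetP => f fF.
have /setIdP[fH fW] := subsetP FWH f fF.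
rewrite inE in_setD fH (subset_trans fW WC).
by rewrite andbT (twoEC_edges_notin_bridges simH CH WC FWH tWF fF).
Qed.

Lemma edges_in_S_of C H : edges_in C (S_of H) \subset edges_in C H.
Proof. by apply/subsetP => e /setIdP[/setDP[eH _] eC]; rewrite inE eH. Qed.

Lemma edges_in_S_of_twoEC_comp H C : simple_graph H -> C \in comps H ->
  twoEC C (edges_in C H) -> edges_in C (S_of H) = edges_in C H.
Proof.
move=> simH CH tC; apply/eqP; rewrite eqEsubset edges_in_S_of.
exact: twoEC_edges_in_S_of simH CH (subxx C) (subxx _) tC.
Qed.

Lemma twoEC_comp_in_comps_S_of H C : simple_graph H -> C \in comps H ->
  twoEC C (edges_in C H) -> C \in comps (S_of H).
Proof.
move=> simH CH tC; have [r _ CE] := imsetP CH.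
have rC : r \in C by rewrite CE inE connect0.
rewrite (compsE CH rC); suff -> : comp_of H r = comp_of (S_of H) r by apply: comp_of_comps.
apply/setP => y; rewrite !mem_comp_of; apply/idP/idP => ry; last first.
  by apply: connect_adjW_mono ry => //; apply: subsetDl.
have yC : y \in C by rewrite (compsE CH rC) mem_comp_of.
have := forall_inP (forall_inP (andP tC).1 r rC) y yC.
rewrite -(edges_in_S_of_twoEC_comp simH CH tC); apply: connect_adjW_mono => //.
by apply/subsetP => e /setIdP[].
Qed.

Lemma canonical_simple E H : simple_graph E -> canonical E H -> simple_graph H.
Proof. by move=> simE [HE _ _ _ _] e /(subsetP HE)/simE. Qed.

Lemma four_le_comp_S_edges E H C : simple_graph E -> canonical E H -> C \in comps H ->
  4 <= #|edges_in C (S_of H)| + triangle_comp H C.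
Proof.
move=> simE canH CH; have simH := canonical_simple simE canH.
case: canH => _ cov cycle_or_large [leaf inner] _.
have [tC|ntC] := boolP (twoEC C (edges_in C H)).
  have tcC : twoEC_comp H C by rewrite /twoEC_comp CH tC.
  rewrite (edges_in_S_of_twoEC_comp simH CH tC).
  have [[i /andP[i3 _] cycC]|large] := cycle_or_large C tcC; last first.
    by rewrite (leq_trans _ (leq_addr _ _)) // (leq_trans _ large).
  have /and4P[_ _ /eqP-> _] := cycC.
  have [i3E|ni3] := eqVneq i 3.
    by rewrite /triangle_comp tcC -i3E cycC i3E.
  by rewrite (leq_trans _ (leq_addr _ _)) // ltn_neqAle eq_sym ni3.
have [W [F blockWF]] := exists_block CH ntC (exists_twoEC_subgraph simH cov CH).
have F4 : 4 <= #|F|.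
  have [nb1|nb1] := eqVneq (nb_incident_bridges H W) 1.
    by apply: leq_trans (leaf C W F (conj blockWF nb1)).
  exact: inner C W F (conj blockWF (elimN eqP nb1)).
case: blockWF => _ _ /and4P[WC FWH tWF _] _.
apply: leq_trans F4 (leq_trans (subset_leq_card _) (leq_addr _ _)).
exact: twoEC_edges_in_S_of simH CH WC FWH tWF.
Qed.

End Bridges.

Section Counting.
Variable V : finType.
Implicit Types (F H S : {set {set V}}).

Definition triangle_comps H := [set C in comps H | triangle_comp H C].

Lemma card_S_of H : #|S_of H| + #|bridges H| = #|H|.
Proof.
by rewrite /S_of cardsD (setIidPr (bridges_subset H)) subnK // subset_leq_card ?bridges_subset.
Qed.

Lemma card_light_heavy H : #|light_comps H| + #|heavy_comps H| = #|comps (S_of H)|.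
Proof.
have sLS : light_comps H \subset comps (S_of H) by apply/subsetP => C /setIdP[].
by rewrite /heavy_comps cardsD (setIidPr sLS) subnKC // subset_leq_card.
Qed.

Lemma card_comps_S_of H : simple_graph H ->
  #|comps (S_of H)| <= #|comps H| + #|bridges H|.
Proof.
move=> simH; have := card_comps_subset (subsetDl H (bridges H)) simH.
by rewrite setDDr setDv set0U (setIidPr (bridges_subset H)).
Qed.

Lemma sum_card_edges_in_comps F S : {in S, forall e, e != set0} ->
  \sum_(C in comps F) #|edges_in C S| <= #|S|.
Proof.
move=> S0; pose phi (e : {set V}) := if [pick x in e] is Some x then comp_of F x else set0.
have phiE e C : C \in comps F -> e != set0 -> e \subset C -> phi e = C.
  move=> CF /set0Pn[x xe] eC; rewrite /phi; case: pickP => [y ye|/(_ x)]; last by rewrite xe.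
  by rewrite (compsE CF (subsetP eC y ye)).
rewrite -[#|S|]sum1_card [X in _ <= X](partition_big phi (mem (comps F))).
  apply: leq_sum => C CF; rewrite sum1dep_card; apply/subset_leq_card/subsetP => e.
  by case/setIdP => eS eC; rewrite inE eS (phiE e C CF (S0 e eS) eC) eqxx.
move=> e eS; rewrite /phi; case: pickP => [x _|e0]; first exact: comp_of_comps.
by have /set0Pn[x] := S0 e eS; rewrite e0.
Qed.

Lemma four_card_comps_le E H : simple_graph E -> canonical E H ->
  4 * #|comps H| <= #|S_of H| + #|triangle_comps H|.
Proof.
move=> simE canH; have simH := canonical_simple simE canH.
have S0 : {in S_of H, forall e, e != set0}.
  by move=> e /setDP[/simH e2 _]; rewrite -card_gt0 e2.
have triE : \sum_(C in comps H) (triangle_comp H C : nat) = #|triangle_comps H|.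
  by rewrite -sum1dep_card big_mkcondr; apply: eq_bigr => C _; case: triangle_comp.
rewrite mulnC -sum_nat_const -triE.
apply: (@leq_trans (\sum_(C in comps H) (#|edges_in C (S_of H)| + triangle_comp H C))).
  by apply: leq_sum => C CH; apply: four_le_comp_S_edges simE canH CH.
by rewrite big_split leq_add2r sum_card_edges_in_comps.
Qed.

Lemma card_triangle_comps_le H : simple_graph H ->
  #|triangle_comps H| <= #|light_comps H|.
Proof.
move=> simH; apply/subset_leq_card/subsetP => C /setIdP[CH triC].
rewrite inE triC andbT; case/andP: triC => /andP[_ tC] _.
exact: twoEC_comp_in_comps_S_of simH CH tC.
Qed.

Lemma card_triangle_edges_le H : #|triangle_edges H| <= 3 * #|triangle_comps H|.
Proof.
have sub : triangle_edges H \subset \bigcup_(C in triangle_comps H) edges_in C H.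
  apply/subsetP => e /setIdP[eH /exists_inP[C CH /andP[triC eC]]].
  by apply/bigcupP; exists C; rewrite !inE ?CH ?triC ?eH ?eC.
apply: leq_trans (subset_leq_card sub) (leq_trans (leq_card_bigcup _ _) _).
rewrite mulnC -sum_nat_const; apply: leq_sum => C /setIdP[_ /andP[_]].
by case/and4P => _ _ /eqP->.
Qed.

Lemma cost_bound_nat E H : simple_graph E -> canonical E H ->
  6 * #|S_of H| + 3 * #|light_comps H| + 12 * #|heavy_comps H| + 2 * #|triangle_edges H|
    <= 9 * #|H| + 3 * #|bridges H|.
Proof.
move=> simE canH; have simH := canonical_simple simE canH.
have := card_S_of H; have := card_light_heavy H; have := card_comps_S_of simH.
have := four_card_comps_le simE canH; have := card_triangle_comps_le simH.
have := card_triangle_edges_le H; lia.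
Qed.

End Counting.

Local Open Scope ring_scope.

Theorem lemma5 (V : finType) (E H : {set {set V}}) (b t : rat) :
  simple_graph E ->
  canonical E H ->
  #|bridges H|%:R = b * #|H|%:R ->
  #|triangle_edges H|%:R = t * #|H|%:R ->
  costS H <= (3 / 2 - t / 3 + b / 2) * #|H|%:R.
Proof.
move=> simE canH Hb Ht; have := cost_bound_nat simE canH.
rewrite -(ler_nat rat) !natrD.
have -> : (3 / 2 - t / 3 + b / 2) * #|H|%:R =
    3 / 2 * #|H|%:R - t * #|H|%:R / 3 + b * #|H|%:R / 2 :> rat by ring.
rewrite -Hb -Ht /costS /credits; lra.
Qed.
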